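(* Let $\sigma$ be a partial action of a locally compact Hausdorff group $G$ on a locally compact Hausdorff space $X$. Consider the conditions: (P1) for every pair of compact sets $L,M\subseteq X$, the set $((L,M)):=\{t\in G:\sigma_t(L\cap X_{t^{-1}})\cap M\neq\emptyset\}$ has compact closure; (P2) for every pair of compact sets $L,M\subseteq X$, the set $((L,M))$ is compact; (P3) the map $F_\sigma\colon\Gamma_\sigma\to X\times X$, $(t,x)\mapsto(\sigma_t(x),x)$, is proper. Then (P3)$\Rightarrow$(P2)$\Rightarrow$(P1), but none of the converse implications holds in general.
   Context: A topological partial action $\sigma=(\{X_t\}_{t\in G},\{\sigma_t\}_{t\in G})$ of $G$ on $X$: open sets $X_t\subseteq X$ and homeomorphisms $\sigma_t\colon X_{t^{-1}}\to X_t$ with $X_e=X$, $\sigma_e=\mathrm{id}$, $\sigma_s(X_{s^{-1}}\cap X_t)=X_s\cap X_{st}$, $\sigma_s\sigma_t=\sigma_{st}$ on $X_{t^{-1}}\cap X_{t^{-1}s^{-1}}$, such that $\Gamma_\sigma:=\{(t,x)\in G\times X:x\in X_{t^{-1}}\}$ is open in $G\times X$ and $(t,x)\mapsto\sigma_t(x)$ is continuous on $\Gamma_\sigma$. A map is proper if preimages of compact sets are compact. *)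

From HB Require Import structures.
From mathcomp Require Import all_boot all_order all_algebra.
From mathcomp Require Import all_classical all_reals all_analysis.
Set Implicit Arguments. Unset Strict Implicit. Unset Printing Implicit Defensive.
Local Open Scope classical_set_scope.

Record topGroup := TopGroup {
  tg_carrier :> topologicalType;
  tg_mul : tg_carrier -> tg_carrier -> tg_carrier;
  tg_inv : tg_carrier -> tg_carrier;
  tg_one : tg_carrier;
  tg_mulA : forall x y z, tg_mul x (tg_mul y z) = tg_mul (tg_mul x y) z;
  tg_mul1g : forall x, tg_mul tg_one x = x;
  tg_mulg1 : forall x, tg_mul x tg_one = x;
  tg_mulVg : forall x, tg_mul (tg_inv x) x = tg_one;
  tg_mulgV : forall x, tg_mul x (tg_inv x) = tg_one;
  tg_mul_cont : continuous (fun p : tg_carrier * tg_carrier => tg_mul p.1 p.2);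
  tg_inv_cont : continuous tg_inv
}.

Definition homeo_on (X : topologicalType) (A B : set X) (f : X -> X) :=
  set_bij A B f /\ {within A, continuous f} /\
  exists g : X -> X, set_bij B A g /\ {within B, continuous g} /\
    (forall x, A x -> g (f x) = x) /\ (forall y, B y -> f (g y) = y).

(* Topological partial action of G on X: domains dom t = X_t, maps act t = sigma_t
   (total functions, only meaningful on X_{t^{-1}}). *)
Record partial_action (G : topGroup) (X : topologicalType) := PartialAction {
  pa_dom : G -> set X;
  pa_act : G -> X -> X;
  pa_dom_open : forall t, open (pa_dom t);
  pa_homeo : forall t, homeo_on (pa_dom (tg_inv t)) (pa_dom t) (pa_act t);
  pa_dom_one : pa_dom (tg_one G) = setT;
  pa_act_one : forall x, pa_act (tg_one G) x = x;
  pa_dom_comp : forall s t,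
    pa_act s @` (pa_dom (tg_inv s) `&` pa_dom t) = pa_dom s `&` pa_dom (tg_mul s t);
  pa_act_comp : forall s t x,
    pa_dom (tg_inv t) x -> pa_dom (tg_inv (tg_mul s t)) x ->
    pa_act s (pa_act t x) = pa_act (tg_mul s t) x;
  pa_Gamma_open : open [set p : G * X | pa_dom (tg_inv p.1) p.2];
  pa_Gamma_cont : {within [set p : G * X | pa_dom (tg_inv p.1) p.2],
                    continuous (fun p : G * X => pa_act p.1 p.2)}
}.

Section PA.
Variables (G : topGroup) (X : topologicalType) (sigma : partial_action G X).

Definition Gamma : set (G * X) := [set p | pa_dom sigma (tg_inv p.1) p.2].

Definition Fsigma (p : G * X) : X * X := (pa_act sigma p.1 p.2, p.2).

Definition return_set (L M : set X) : set G :=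
  [set t | exists x, [/\ L x, pa_dom sigma (tg_inv t) x & M (pa_act sigma t x)]].

Definition P1 := forall L M : set X, compact L -> compact M ->
  compact (closure (return_set L M)).
Definition P2 := forall L M : set X, compact L -> compact M ->
  compact (return_set L M).
Definition P3 := forall K : set (X * X), compact K ->
  compact (Gamma `&` Fsigma @^-1` K).
End PA.

Definition LCH (T : topologicalType) := locally_compact [set: T] /\ hausdorff_space T.

From HB Require Import structures.
From mathcomp Require Import all_boot all_order all_algebra.
From mathcomp Require Import all_classical all_reals all_analysis.
From mathcomp Require Import ring lra Rstruct.
Set Implicit Arguments. Unset Strict Implicit. Unset Printing Implicit Defensive.
Import Order.TTheory GRing.Theory Num.Theory.
Import numFieldNormedType.Exports.
Local Open Scope classical_set_scope.
Local Open Scope ring_scope.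

(* (P3) => (P2): ((L, M)) is the projection to G of Gamma /\ F^-1 (M x L), which is
   compact when F is proper.  (P2) => (P1): compact subsets of a Hausdorff group are
   closed.
   (P2) does not imply (P3): let Z/2 act trivially on R with X_1 = (0, oo).  Return
   sets lie in the finite group, but the part of Gamma /\ F^-1 ([0, 1]^2) over 1 is
   {1} x (0, 1].
   (P1) does not imply (P2): let R act on R^2 \ {0} by horizontal translation,
   sigma_t p being defined only when the segment from p to p + (t, 0) avoids the
   origin.  Return sets consist of horizontal displacements between points of L and M,
   hence have compact closure; but for L = {-1} x [0, 1] and M = {(1 + y, y) | y in
   [0, 1]} the return set is (2, 3]: the displacement 2 would carry (-1, 0) across the
   origin. *)

Section Implications.
Variables (G : topGroup) (X : topologicalType) (sigma : partial_action G X).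

Lemma return_setE (L M : set X) :
  return_set sigma L M = fst @` (Gamma sigma `&` Fsigma sigma @^-1` (M `*` L)).
Proof.
apply/seteqP; split=> [t [x [Lx Dx Mx]]|_ [[t x] [Dx [/= Mx Lx]] <-]].
  by exists (t, x).
by exists x.
Qed.

Lemma P3_P2 : P3 sigma -> P2 sigma.
Proof.
move=> proper L M cL cM; rewrite return_setE.
apply: continuous_compact; last exact/proper/compact_setX.
by apply: continuous_subspaceT => p; exact: cvg_fst.
Qed.

Lemma P2_P1 : hausdorff_space G -> P2 sigma -> P1 sigma.
Proof.
move=> hG P2s L M cL cM; have cLM := P2s L M cL cM.
by rewrite -(closure_id _).1 //; exact: compact_closed.
Qed.

End Implications.

Lemma homeo_on_can (X : topologicalType) (A B : set X) (f g : X -> X) :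
  (forall x, A x -> B (f x)) -> (forall y, B y -> A (g y)) ->
  {within A, continuous f} -> {within B, continuous g} ->
  (forall x, A x -> g (f x) = x) -> (forall y, B y -> f (g y) = y) ->
  homeo_on A B f.
Proof.
move=> fAB gBA cf cg gK fK.
have bij (C D : set X) (h k : X -> X) : (forall x, C x -> D (h x)) ->
    (forall y, D y -> C (k y)) -> (forall x, C x -> k (h x) = x) ->
    (forall y, D y -> h (k y) = y) -> set_bij C D h.
  move=> hCD kDC kK hK; split=> [x /hCD //|x y /set_mem Cx /set_mem Cy hxy|y Dy].
    by rewrite -(kK x Cx) -(kK y Cy) hxy.
  by exists (k y); [exact: kDC | exact: hK].
split; first exact: bij gBA gK fK.
by split=> //; exists g; split; first exact: bij fAB fK gK.
Qed.

Lemma discrete_prod_continuous (T1 T2 : discreteTopologicalType)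
    (U : topologicalType) (f : T1 * T2 -> U) : continuous f.
Proof.
move=> [a b] V /= fV; exists ([set a], [set b]); first by split; exact: discrete_set1.
by move=> [c d] [/= -> ->]; exact: nbhs_singleton.
Qed.

Lemma open_discrete_graph (T : discreteTopologicalType) (X : topologicalType)
    (D : T -> set X) : (forall t, open (D t)) -> open [set p : T * X | D p.1 p.2].
Proof.
move=> oD; rewrite openE => -[t x] /= Dx; exists ([set t], D t) => /=.
  by split; [exact: discrete_set1 | exact: open_nbhs_nbhs].
by move=> [s y] [/= -> ?].
Qed.

Lemma discrete_LCH (T : discreteTopologicalType) : LCH T.
Proof.
split; last exact: discrete_hausdorff.
move=> x _; exists [set x]; first by rewrite withinET; exact: discrete_set1.
by split; [exact: compact_set1 | exact: discrete_closed].
Qed.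

Lemma realType_LCH (R : realType) : LCH R.
Proof. by split; [exact: locally_compactR | exact: Rhausdorff]. Qed.

Lemma itvoc_not_compact (R : realType) (a b : R) : a < b -> ~ compact `]a, b].
Proof.
move=> ab /(compact_closed (@Rhausdorff R)) cl.
set c := (a + b) / 2; set r := (b - a) / 2.
have r0 : 0 < r by rewrite divr_gt0 // subr_gt0.
have ac : a = c - r by rewrite /c /r; field.
have bc : b = c + r by rewrite /c /r; field.
have : closure `]a, b] a.
  apply: (@closureS _ (ball c r)).
    by rewrite ball_itv -ac -bc => x /=; rewrite !in_itv /= => /andP[-> /ltW ->].
  by rewrite closure_ballE closed_ball_itv // -ac -bc /= in_itv /= lexx ltW.
by move/cl; rewrite /= in_itv /= ltxx.
Qed.

Section SetType.
Variables (X : topologicalType) (A : set X).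

Lemma set_val_continuous : continuous (set_val : set_type A -> X).
Proof. exact: initial_continuous. Qed.

Lemma set_type_continuous_at (Z : topologicalType) (f : Z -> set_type A)
    (g : Z -> X) (z : Z) :
  (\forall w \near z, set_val (f w) = g w) -> {for z, continuous g} ->
  {for z, continuous f}.
Proof.
move=> fg cg U /= [_ [[V oV <-] /= Vfz VU]].
have gV : nbhs z (g @^-1` V).
  by apply: cg; apply: open_nbhs_nbhs; split; rewrite // -(nbhs_singleton fg).
by apply: filterS (filterI fg gV) => w [fgw Vgw]; apply: VU; rewrite /= fgw.
Qed.

Lemma set_type_hausdorff : hausdorff_space X -> hausdorff_space (set_type A).
Proof.
move=> hX p q pq; apply: val_inj; apply: hX => U V.
move=> /set_val_continuous nU /set_val_continuous nV.
by have [w [Uw Vw]] := pq _ _ nU nV; exists (set_val w).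
Qed.

Lemma compact_set_type (K : set X) :
  K `<=` A -> compact K -> compact (set_val @^-1` K : set (set_type A)).
Proof.
move=> KA cK F PF FK; have [x [Kx clx]] := cK (set_val @ F) _ FK.
exists (exist _ x (mem_set (KA x Kx))); split=> // B V FB [_ [[W oW <-] /= Wx WV]].
have FvB : F (set_val @^-1` (set_val @` B)) by apply: filterS FB => b Bb; exists b.
have [_ [[b Bb <-] Wb]] := clx _ W FvB (open_nbhs_nbhs (conj oW Wx)).
by exists b; split=> //; exact: WV.
Qed.

Lemma set_type_locally_compact : hausdorff_space X ->
  (forall x, A x -> exists2 K, nbhs x K & compact K /\ K `<=` A) ->
  locally_compact [set: set_type A].
Proof.
move=> hX nbhsK q _; have [K nK [cK KA]] := nbhsK _ (set_mem (valP q)).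
exists (set_val @^-1` K); first by rewrite withinET; exact: set_val_continuous.
split; first exact: compact_set_type.
by apply: compact_closed; [exact: set_type_hausdorff | exact: compact_set_type].
Qed.

End SetType.

Definition bool_topGroup : topGroup :=
  @TopGroup bool addb id false addbA addFb addbF addbb addbb
    (@discrete_prod_continuous _ _ _ (fun p => addb p.1 p.2)) (fun x => cvg_id).

Definition additive_topGroup (K : numFieldType) (V : normedModType K) : topGroup :=
  @TopGroup V +%R -%R 0 (@addrA V) (@add0r V) (@addr0 V) (@addNr V) (@subrr V)
    add_continuous opp_continuous.

Section TrivialAction.
Variables (X : topologicalType) (U : set X).
Hypothesis oU : open U.

Definition triv_dom (t : bool_topGroup) : set X := if t then U else setT.

Lemma triv_dom_open t : open (triv_dom t).
Proof. by case: t; [exact: oU | exact: openT]. Qed.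

Lemma triv_homeo t : homeo_on (triv_dom (tg_inv t)) (triv_dom t) id.
Proof.
have cid : {within triv_dom t, continuous id}.
  by apply: continuous_subspaceT => x; exact: cvg_id.
by apply: (homeo_on_can (g := id)).
Qed.

Definition triv_action : partial_action bool_topGroup X.
refine (@PartialAction _ _ triv_dom (fun _ => id) triv_dom_open triv_homeo
  erefl (fun _ => erefl) _ (fun _ _ _ _ _ => erefl) _ _).
- by move=> [] [] /=; rewrite image_id ?setIT ?setIid.
- exact: (@open_discrete_graph bool X triv_dom triv_dom_open).
- by apply: continuous_subspaceT => p; exact: cvg_snd.
Defined.

Lemma triv_P2 : P2 triv_action.
Proof.
by move=> L M _ _; exact: subclosed_compact (discrete_closed _) bool_compact _.
Qed.

Lemma triv_not_P3 (K : set X) : compact K -> ~ compact (K `&` U) -> ~ P3 triv_action.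
Proof.
move=> cK ncKU proper; apply: ncKU.
have cS := proper _ (compact_setX cK cK).
have -> : K `&` U = snd @` (Gamma triv_action `&` Fsigma triv_action @^-1` (K `*` K)
    `&` fst @^-1` [set true]).
  apply/seteqP; split=> [x [Kx Ux]|_ [[t x] [[Dx [Kx _]] /= t1] <-]].
    by exists (true, x).
  by subst t.
apply: continuous_compact; first by apply: continuous_subspaceT => p; exact: cvg_snd.
apply: compact_closedI cS _; apply: closed_comp; last exact: discrete_closed.
by move=> p _; exact: cvg_fst.
Qed.

End TrivialAction.

Lemma half_line_not_P3 (R : realType) : ~ P3 (triv_action (@open_gt R 0)).
Proof.
apply: (triv_not_P3 (@segment_compact _ 0 1)).
have -> : `[0, 1]%classic `&` [set x : R | 0 < x] = `]0, 1]%classic.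
  apply/seteqP; split=> x; rewrite /= !in_itv /=; first by case=> /andP[_ ->] ->.
  by case/andP=> x0 ->; rewrite x0 ltW.
by apply: itvoc_not_compact; exact: ltr01.
Qed.

Lemma pair_neq0 (U V : zmodType) (a : U) (b : V) :
  ((a, b) != 0) = (a != 0) || (b != 0).
Proof. by rewrite -negb_and. Qed.

Section HorizontalFlow.
Variable R : realType.

Definition flow_group : topGroup := additive_topGroup R.

Definition punctured_plane : set (R * R) := [set p | p != 0].

(* The horizontal segment from p - (t, 0) to p avoids the origin. *)
Definition flow_dom (t : R) (p : R * R) : bool :=
  (p.2 != 0) || (0 < p.1 * (p.1 - t)).

Definition shift (t : R) (p : R * R) : R * R := (p.1 + t, p.2).

Lemma flow_dom_neq0 t p : flow_dom t p -> p != 0.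
Proof.
case: p => a b; rewrite /flow_dom pair_neq0 /= => /orP[->|ab]; first by rewrite orbT.
by apply/orP; left; apply: contraTneq ab => ->; rewrite mul0r ltxx.
Qed.

Lemma flow_dom0 p : p != 0 -> flow_dom 0 p.
Proof.
case: p => a b; rewrite /flow_dom pair_neq0 subr0 /= => /orP[a0|->//].
by rewrite -expr2 exprn_even_gt0 ?a0 ?orbT.
Qed.

Lemma flow_dom_shift u v p :
  flow_dom u p -> flow_dom v p -> flow_dom (v - u) (shift (- u) p).
Proof.
case: p => a b; rewrite /flow_dom /shift /=; case: (b != 0) => //= hu hv.
(* a^2 (a - u) (a - v) is the positive product a (a - u) * a (a - v). *)
nra.
Qed.

Lemma flow_dom_image t p : flow_dom (- t) p -> flow_dom t (shift t p).
Proof.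
move=> Dp; have := flow_dom_shift Dp (flow_dom0 (flow_dom_neq0 Dp)).
by rewrite sub0r !opprK.
Qed.

Lemma shiftD s t p : shift s (shift t p) = shift (s + t) p.
Proof. by rewrite /shift /= addrAC addrA. Qed.

Lemma shift0 p : shift 0 p = p.
Proof. by case: p => a b; rewrite /shift addr0. Qed.

Lemma shift_continuous_at (Z : topologicalType) (g : Z -> R) (f : Z -> R * R) z :
  {for z, continuous g} -> {for z, continuous f} ->
  {for z, continuous (fun w => shift (g w) (f w))}.
Proof.
move=> cg cf.
apply: (@cvg_pair _ _ _ (nbhs z) (nbhs ((f z).1 + g z)) (nbhs (f z).2)).
  apply: (@continuousD _ _ _ (fst \o f) g) => //.
  by apply: continuous_comp cf _; exact: cvg_fst.
by apply: (@continuous_comp _ _ _ f snd) cf _; exact: cvg_snd.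
Qed.

Lemma open_flow_dom : open [set tp : R * (R * R) | flow_dom tp.1 tp.2].
Proof.
have -> : [set tp : R * (R * R) | flow_dom tp.1 tp.2] =
    (fun tp => tp.2.2) @^-1` [set x | x != 0] `|`
    (fun tp => tp.2.1 * (tp.2.1 - tp.1)) @^-1` [set x | 0 < x].
  by apply/seteqP; split=> tp /=; rewrite /flow_dom => /orP.
have c21 : continuous (fun tp : R * (R * R) => tp.2.1).
  move=> tp; apply: (@continuous_comp _ _ _ snd fst); first exact: cvg_snd.
  exact: cvg_fst.
apply: openU; apply: (continuousP _).1; try exact: open_neq; try exact: open_gt.
  by move=> tp; apply: (@continuous_comp _ _ _ snd snd); exact: cvg_snd.
move=> tp; apply: (@continuousM _ _ (fun tp => tp.2.1) (fun tp => tp.2.1 - tp.1)).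
  exact: c21.
by apply: (@continuousB _ _ _ (fun tp => tp.2.1) fst); [exact: c21 | exact: cvg_fst].
Qed.

Local Notation P := (set_type punctured_plane).

Definition flow_domain (t : R) : set P := [set q | flow_dom t (set_val q)].

(* Off [flow_domain (- t)] the value is the junk default [q]. *)
Definition flow (t : R) (q : P) : P := insubd q (shift t (set_val q)).

Lemma flowE t q : flow_domain (- t) q -> set_val (flow t q) = shift t (set_val q).
Proof.
by move=> Dq; rewrite set_valE insubdK //; exact/mem_set/flow_dom_neq0/flow_dom_image.
Qed.

Lemma flow_continuous_at (Z : topologicalType) (g : Z -> R) (f : Z -> P) z :
  flow_domain (- g z) (f z) -> {for z, continuous g} -> {for z, continuous f} ->
  {for z, continuous (fun w => flow (g w) (f w))}.
Proof.
move=> Dz cg cf; have cvf := continuous_comp cf (@set_val_continuous _ _ (f z)).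
have near_dom : \forall w \near z, flow_domain (- g w) (f w).
  have cgf : {for z, continuous (fun w => (- g w, set_val (f w)))}.
    apply: (@cvg_pair _ _ _ (nbhs z) (nbhs (- g z)) (nbhs (set_val (f z)))).
      exact: (@continuousN _ _ _ g).
    exact: cvf.
  apply: (cgf [set tp | flow_dom tp.1 tp.2]); apply: open_nbhs_nbhs.
  by split; [exact: open_flow_dom | exact: Dz].
apply: (set_type_continuous_at (g := fun w => shift (g w) (set_val (f w)))).
  by move: near_dom; apply: filterS => w; exact: flowE.
exact: shift_continuous_at cg cvf.
Qed.

Lemma open_flow_domain t : open (flow_domain t).
Proof.
have ctq : continuous (fun q : P => (t, set_val q)).
  move=> q; apply: (@cvg_pair _ _ _ (nbhs q) (nbhs t) (nbhs (set_val q))).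
    exact: cvg_cst.
  exact: set_val_continuous.
exact: (continuousP _).1 ctq _ open_flow_dom.
Qed.

Lemma flow_continuous t : {within flow_domain (- t), continuous (flow t)}.
Proof.
rewrite continuous_open_subspace; last exact: open_flow_domain.
move=> q /set_mem Dq.
apply: (flow_continuous_at (g := fun=> t) (f := id) Dq).
  exact: cst_continuous.
exact: cvg_id.
Qed.

Lemma flow_homeo t : homeo_on (flow_domain (- t)) (flow_domain t) (flow t).
Proof.
have flowNE y : flow_domain t y -> set_val (flow (- t) y) = shift (- t) (set_val y).
  by move=> Dy; rewrite flowE ?opprK.
apply: (homeo_on_can (g := flow (- t))).
- by move=> x Dx; rewrite /flow_domain /= flowE //; exact: flow_dom_image.
- move=> y Dy; rewrite /flow_domain /= flowNE //.
  by apply: flow_dom_image; rewrite opprK.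
- exact: flow_continuous.
- by have := @flow_continuous (- t); rewrite opprK.
- move=> x Dx; apply: val_inj; rewrite -!set_valE flowNE ?flowE //.
    by rewrite shiftD addNr shift0.
  by rewrite /flow_domain /= flowE //; exact: flow_dom_image.
- move=> y Dy; apply: val_inj; rewrite -!set_valE flowE ?flowNE //.
    by rewrite shiftD addrN shift0.
  by rewrite /flow_domain /= flowNE //; apply: flow_dom_image; rewrite opprK.
Qed.

Lemma flow_domain0 : flow_domain 0 = setT.
Proof. by apply/seteqP; split=> // q _; apply: flow_dom0; exact: set_mem (valP q). Qed.

Lemma flow0 q : flow 0 q = q.
Proof. by rewrite /flow shift0 set_valE valKd. Qed.

Lemma flow_domainD s t :
  flow s @` (flow_domain (- s) `&` flow_domain t) =
  flow_domain s `&` flow_domain (s + t).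
Proof.
apply/seteqP; split=> [_ [q [D1 D2] <-]|q [D1 D2]].
  rewrite /flow_domain /= flowE //; split; first exact: flow_dom_image.
  by have := flow_dom_shift D1 D2; rewrite !opprK addrC.
have Dq : flow_domain (- - s) q by rewrite opprK.
have DNq : flow_domain (- s) (flow (- s) q).
  by rewrite /flow_domain /= flowE //; exact: flow_dom_image.
exists (flow (- s) q).
  split=> //; rewrite /flow_domain /= flowE //.
  by have := flow_dom_shift D1 D2; rewrite (addrC s t) addrK.
by apply: val_inj; rewrite -!set_valE !flowE // shiftD addrN shift0.
Qed.

Lemma flowD s t q : flow_domain (- t) q -> flow_domain (- (s + t)) q ->
  flow s (flow t q) = flow (s + t) q.
Proof.
move=> D1 D2; have D3 : flow_domain (- s) (flow t q).
  rewrite /flow_domain /= flowE //.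
  by have := flow_dom_shift D1 D2; rewrite !opprK opprD addrNK.
by apply: val_inj; rewrite -!set_valE !flowE // shiftD.
Qed.

Lemma open_flow_graph : open [set p : R * P | flow_domain (- p.1) p.2].
Proof.
have cp : continuous (fun p : R * P => (- p.1, set_val p.2)).
  move=> p; apply: (@cvg_pair _ _ _ (nbhs p) (nbhs (- p.1)) (nbhs (set_val p.2))).
    by apply: (@continuousN _ _ _ fst); exact: cvg_fst.
  apply: (@continuous_comp _ _ _ snd set_val); first exact: cvg_snd.
  exact: set_val_continuous.
exact: (continuousP _).1 cp _ open_flow_dom.
Qed.

Lemma flow_graph_continuous : {within [set p : R * P | flow_domain (- p.1) p.2],
  continuous (fun p : R * P => flow p.1 p.2)}.
Proof.
rewrite continuous_open_subspace; last exact: open_flow_graph.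
move=> p /set_mem Dp; apply: (flow_continuous_at (g := fst) (f := snd) Dp).
  exact: cvg_fst.
exact: cvg_snd.
Qed.

Definition flow_action : partial_action flow_group P :=
  @PartialAction flow_group P flow_domain flow open_flow_domain flow_homeo
    flow_domain0 flow0 flow_domainD flowD open_flow_graph flow_graph_continuous.

Lemma punctured_plane_compact_nbhs v : punctured_plane v ->
  exists2 K, nbhs v K & compact K /\ K `<=` punctured_plane.
Proof.
case: v => a b v0; set r := (`|a| + `|b|) / 4.
have r0 : 0 < r.
  rewrite divr_gt0 //; move: v0; rewrite /punctured_plane /= pair_neq0.
  by case/orP=> ?; [apply: ltr_pwDl | apply: ltr_pwDr]; rewrite ?normr_gt0.
have itv_nbhs (c : R) : nbhs c `[c - r, c + r]%classic.
  rewrite -closed_ball_itv //; apply: filterS (@subset_closed_ball _ _ c r) _.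
  exact: nbhsx_ballx.
exists (`[a - r, a + r]%classic `*` `[b - r, b + r]%classic).
  by exists (`[a - r, a + r]%classic, `[b - r, b + r]%classic); [split; exact: itv_nbhs|].
split; first by apply: compact_setX; exact: segment_compact.
move=> [x y] [/=]; rewrite !in_itv /= => /andP[xa1 xa2] /andP[yb1 yb2].
rewrite /punctured_plane /= pair_neq0; apply: contraT.
rewrite negb_or !negbK => /andP[/eqP x0 /eqP y0].
have ha : `|a| <= r by rewrite ler_norml; lra.
have hb : `|b| <= r by rewrite ler_norml; lra.
by move: r0 ha hb; rewrite /r; lra.
Qed.

Lemma punctured_plane_LCH : LCH P.
Proof.
have hRR : hausdorff_space (R * R)%type := @norm_hausdorff R (R * R)%type.
split; last exact: set_type_hausdorff.
exact: set_type_locally_compact punctured_plane_compact_nbhs.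
Qed.

Lemma flow_P1 : P1 flow_action.
Proof.
move=> L M cL cM; pose d (r : P * P) := (set_val r.1).1 - (set_val r.2).1.
have cd : continuous d.
  move=> r; apply: (@continuousB _ _ _ (fun r : P * P => (set_val r.1).1)
    (fun r : P * P => (set_val r.2).1)).
    apply: (@continuous_comp _ _ _ (set_val \o fst) fst); last exact: cvg_fst.
    by apply: continuous_comp; [exact: cvg_fst | exact: set_val_continuous].
  apply: (@continuous_comp _ _ _ (set_val \o snd) fst); last exact: cvg_fst.
  by apply: continuous_comp; [exact: cvg_snd | exact: set_val_continuous].
have cdML : compact (d @` (M `*` L)).
  by apply: continuous_compact; [exact: continuous_subspaceT | exact: compact_setX].
rewrite -precompactE; apply: (precompact_subset (B := d @` (M `*` L))).
  move=> t [q [Lq Dq Mq]]; exists (flow t q, q) => //.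
  by rewrite /d /= flowE // /shift /= addrC addKr.
by rewrite precompact_closed //; exact: compact_closed (@Rhausdorff R) cdML.
Qed.

Definition left_segment : set P := set_val @^-1` ([set -1] `*` `[0, 1]%classic).

Definition slanted_segment : set P :=
  set_val @^-1` ((fun y => (1 + y, y)) @` `[0, 1]%classic).

Lemma compact_left_segment : compact left_segment.
Proof.
apply: compact_set_type.
  by move=> [a b] [/= -> _]; rewrite /punctured_plane /= pair_neq0 oppr_eq0 oner_eq0.
by apply: compact_setX; [exact: compact_set1 | exact: segment_compact].
Qed.

Lemma compact_slanted_segment : compact slanted_segment.
Proof.
apply: compact_set_type.
  move=> _ [y + <-]; rewrite /= in_itv /= => /andP[y0 _].
  by rewrite /punctured_plane /= pair_neq0 gt_eqF //; lra.
apply: continuous_compact; last exact: segment_compact.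
apply: continuous_subspaceT => y.
apply: (@cvg_pair _ _ _ (nbhs y) (nbhs (1 + y)) (nbhs y)); last exact: cvg_id.
by apply: cvgD; [exact: cvg_cst | exact: cvg_id].
Qed.

Lemma return_set_segments :
  return_set flow_action left_segment slanted_segment = `]2, 3]%classic.
Proof.
apply/seteqP; split=> [t [q [[q1 q2] Dq [y y01 qy]]]|t].
  move: qy; rewrite /= (flowE Dq) /shift q1 => -[e1 e2]; move: Dq.
  rewrite /= /flow_domain /flow_dom /= -e2 q1; move: y01; rewrite /= !in_itv /=.
  by move=> /andP[y0 y1] /orP[yn0|neg]; apply/andP; split; lra.
rewrite /= in_itv /= => /andP[t2 t3].
have p0 : punctured_plane (-1, t - 2).
  by rewrite /punctured_plane /= pair_neq0 oppr_eq0 oner_eq0.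
pose q : P := exist _ (-1, t - 2) (mem_set p0).
have Dq : flow_domain (- t) q.
  by rewrite /flow_domain /= set_valE /flow_dom /= gt_eqF //; lra.
exists q; split=> //.
  by rewrite /left_segment /= in_itv /=; split=> //; apply/andP; split; lra.
exists (t - 2); first by rewrite /= in_itv /=; apply/andP; split; lra.
by rewrite /= (flowE Dq) set_valE /shift /=; congr (_, _); ring.
Qed.

Lemma flow_not_P2 : ~ P2 flow_action.
Proof.
move=> /(_ _ _ compact_left_segment compact_slanted_segment).
by rewrite return_set_segments; apply: itvoc_not_compact; lra.
Qed.

End HorizontalFlow.

Theorem proposition1p3 :
  (forall (G : topGroup) (X : topologicalType) (sigma : partial_action G X),
     LCH G -> LCH X -> P3 sigma -> P2 sigma) /\
  (forall (G : topGroup) (X : topologicalType) (sigma : partial_action G X),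
     LCH G -> LCH X -> P2 sigma -> P1 sigma) /\
  (exists (G : topGroup) (X : topologicalType) (sigma : partial_action G X),
     [/\ LCH G, LCH X, P2 sigma & ~ P3 sigma]) /\
  (exists (G : topGroup) (X : topologicalType) (sigma : partial_action G X),
     [/\ LCH G, LCH X, P1 sigma & ~ P2 sigma]).
Proof.
split; first by move=> G X sigma _ _; exact: P3_P2.
split; first by move=> G X sigma [_ hG] _; exact: P2_P1.
split.
  exists bool_topGroup, _, (triv_action (@open_gt Rdefinitions.R 0)).
  split; [exact: discrete_LCH | exact: realType_LCH | exact: triv_P2 |].
  exact: half_line_not_P3.
exists (flow_group Rdefinitions.R), _, (flow_action Rdefinitions.R).
split; [exact: realType_LCH | exact: punctured_plane_LCH | exact: flow_P1 |].
exact: flow_not_P2.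
Qed.
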